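(* For every $b\in\mathbb R$, $$\lim_{z\to\infty}e^{-z}z^{b+1}\sum_{k=1}^\infty\frac{z^{k-1}}{k!\,k^b}=1.$$ Moreover, if $b\ge-1$, then $$\sup_{z\ge0}\ e^{-z}z^{b+1}\sum_{k=1}^\infty\frac{z^{k-1}}{k!\,k^b}<\infty.$$ *)

From Stdlib Require Import Reals Arith.
Open Scope R_scope.

(* n-th term (n = k-1, k >= 1) of the series  sum_{k>=1} z^(k-1) / (k! * k^b). *)
Definition sterm (b z : R) (n : nat) : R :=
  z ^ n / (INR (fact (S n)) * Rpower (INR (S n)) b).

Definition Fval (b z l : R) : R := exp (- z) * Rpower z (b + 1) * l.

From Stdlib Require Import Reals Arith Lra Lia.
From Coquelicot Require Import Coquelicot.
Open Scope R_scope.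

(* With the shifted Poisson weights w_k = e^{-z} z^(k+1)/(k+1)! and t_k = (k+1)/z,
   the quantity of the theorem is the moment M_z(a) = sum_k w_k t_k^a at a = -b.
   Here M_z(0) <= 1, and M_z(1) = 1 because w_k t_k is the Poisson weight of k.
   Convexity of a |-> t^a makes a |-> M_z(a) convex.  For integers m >= 0 the
   recursions M_z(m+2) <= (1 + (m+1)/z) M_z(m+1) and
   M_z(-m-1) <= M_z(-m) + (m+1) 2^(m+1)/z M_z(-m-1) show that M_z(m) and M_z(-m)
   are at most 1 + o(1) as z -> oo.  Interpolating a between -m and m gives
   limsup M_z(a) <= 1; interpolating 1 between a and 2 (or between 0 and a) gives
   liminf M_z(a) >= 1.  For a <= 1, interpolating between -m and 0 (or 0 and 1),
   together with the crude bound M_z(-m) <= z^m for small z, bounds M_z(a). *)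

Lemma exp_ge_tangent x y : exp x * (1 + (y - x)) <= exp y.
Proof.
  replace y with (x + (y - x)) at 2 by ring. rewrite exp_plus.
  apply Rmult_le_compat_l; [left; apply exp_pos | apply exp_ineq1_le].
Qed.

Lemma Rpower_interpolate t u a v : u <= a <= v ->
  (v - u) * Rpower t a <= (v - a) * Rpower t u + (a - u) * Rpower t v.
Proof.
  intros Ha. unfold Rpower.
  pose proof (exp_ge_tangent (a * ln t) (u * ln t)) as Hu.
  pose proof (exp_ge_tangent (a * ln t) (v * ln t)) as Hv.
  apply Rmult_le_compat_l with (r := v - a) in Hu; [|lra].
  apply Rmult_le_compat_l with (r := a - u) in Hv; [|lra].
  nra.
Qed.

Lemma pow_succ_add_le y e n : 0 <= y -> 0 <= e ->
  (y + e) ^ S n <= y ^ S n + INR (S n) * e * (y + e) ^ n.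
Proof.
  intros Hy He. induction n as [|n IH].
  - simpl. lra.
  - assert (Hmono : y ^ S n <= (y + e) ^ S n) by (apply pow_incr; lra).
    assert (Hstep : (y + e) * (y + e) ^ S n
                    <= (y + e) * (y ^ S n + INR (S n) * e * (y + e) ^ n))
      by (apply Rmult_le_compat_l; lra).
    rewrite S_INR. simpl pow in *. nra.
Qed.

Lemma fact_INR_pos k : 0 < INR (fact k).
Proof. apply lt_0_INR, lt_O_fact. Qed.

Lemma pow_le_fact_mul_exp x n : 0 <= x -> x ^ n <= INR (fact n) * exp x.
Proof.
  intros Hx. pose proof (fact_INR_pos n) as Hf.
  assert (Hterm : x ^ n / INR (fact n) <= exp x).
  { eapply Rle_trans; [|apply (exp_ge_taylor x n Hx)].
    destruct n as [|n]; [apply Rle_refl|]. rewrite tech5.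
    enough (0 <= sum_f_R0 (fun k => x ^ k / INR (fact k)) n) by lra.
    apply cond_pos_sum. intros k.
    apply Rdiv_le_0_compat; [apply pow_le, Hx | apply fact_INR_pos]. }
  replace (x ^ n) with (INR (fact n) * (x ^ n / INR (fact n))) by (field; lra).
  apply Rmult_le_compat_l; lra.
Qed.

Definition poisson (z : R) (k : nat) : R := exp (- z) * (/ INR (fact k) * z ^ k).

Definition ratio (z : R) (k : nat) : R := INR (S k) / z.

Definition moment_term (z a : R) (k : nat) : R := poisson z (S k) * Rpower (ratio z k) a.

Definition moment (z a : R) : R := Series (moment_term z a).

Lemma poisson_nonneg z k : 0 <= z -> 0 <= poisson z k.
Proof.
  intros Hz. unfold poisson. apply Rmult_le_pos; [left; apply exp_pos|].
  apply Rmult_le_pos; [left; apply Rinv_0_lt_compat, fact_INR_pos | apply pow_le, Hz].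
Qed.

Lemma is_series_poisson z : is_series (poisson z) 1.
Proof.
  assert (Hexp : is_series (fun k => / INR (fact k) * z ^ k) (exp z))
    by apply is_series_Reals, (proj2_sig (exist_exp z)).
  apply (is_series_scal_l (exp (- z))) in Hexp.
  replace 1 with (exp (- z) * exp z) by (rewrite <- exp_plus, Rplus_opp_l; apply exp_0).
  exact Hexp.
Qed.

Lemma ratio_pos z k : 0 < z -> 0 < ratio z k.
Proof. intros Hz. apply Rdiv_lt_0_compat; [apply lt_0_INR; lia | exact Hz]. Qed.

Lemma poisson_succ_mul_ratio z k : 0 < z -> poisson z (S k) * ratio z k = poisson z k.
Proof.
  intros Hz. unfold poisson, ratio. rewrite fact_simpl, mult_INR. simpl pow.
  pose proof (fact_INR_pos k). pose proof (lt_0_INR (S k) ltac:(lia)). field. lra.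
Qed.

Lemma sterm_abs_le b z n M : - b <= INR M ->
  Rabs (sterm b z n) <= INR (fact M) * exp 1 * (/ INR (fact n) * (exp 1 * Rabs z) ^ n).
Proof.
  intros HM. unfold sterm.
  pose proof (fact_INR_pos n). pose proof (fact_INR_pos (S n)). pose proof (fact_INR_pos M).
  assert (HN : 1 <= INR (S n)) by (rewrite S_INR; pose proof (pos_INR n); lra).
  assert (HP : 0 < Rpower (INR (S n)) b) by apply exp_pos.
  assert (Hpow : / Rpower (INR (S n)) b <= INR (fact M) * (exp 1 * exp 1 ^ n)).
  { replace (exp 1 * exp 1 ^ n) with (exp (INR (S n))).
    - rewrite <- Rpower_Ropp. eapply Rle_trans; [|apply pow_le_fact_mul_exp; lra].
      rewrite <- Rpower_pow by lra. apply Rle_Rpower; lra.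
    - rewrite <- (Rpower_pow n) by apply exp_pos.
      unfold Rpower. rewrite ln_exp, Rmult_1_r, <- exp_plus, S_INR. f_equal; ring. }
  assert (Hfact : / INR (fact (S n)) <= / INR (fact n)).
  { apply Rinv_le_contravar; [lra|]. rewrite fact_simpl, mult_INR. nra. }
  assert (0 <= Rabs z ^ n) by apply pow_le, Rabs_pos.
  assert (0 < / INR (fact (S n))) by apply Rinv_0_lt_compat, fact_INR_pos.
  unfold Rdiv. rewrite Rabs_mult, Rabs_inv, <- RPow_abs, Rabs_mult, Rinv_mult,
    (Rabs_right (INR _)), (Rabs_right (Rpower _ _)) by lra.
  apply Rle_trans with (Rabs z ^ n * / INR (fact (S n)) * (INR (fact M) * (exp 1 * exp 1 ^ n))).
  { rewrite <- Rmult_assoc. apply Rmult_le_compat_l; [nra | exact Hpow]. }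
  apply Rle_trans with (Rabs z ^ n * / INR (fact n) * (INR (fact M) * (exp 1 * exp 1 ^ n))).
  { apply Rmult_le_compat_r.
    { pose proof (exp_pos 1). pose proof (pow_le (exp 1) n).
      apply Rmult_le_pos; [lra|]. apply Rmult_le_pos; lra. }
    apply Rmult_le_compat_l; lra. }
  rewrite Rpow_mult_distr. right. ring.
Qed.

Lemma ex_series_sterm b z : ex_series (sterm b z).
Proof.
  destruct (INR_unbounded (- b)) as [M HM].
  apply (@ex_series_le R_AbsRing R_CompleteNormedModule _
           (fun n => INR (fact M) * exp 1 * (/ INR (fact n) * (exp 1 * Rabs z) ^ n))).
  - intros n. apply sterm_abs_le. lra.
  - apply (@ex_series_scal_l R_AbsRing R_NormedModule).
    exists (exp (exp 1 * Rabs z)). apply is_series_Reals, (proj2_sig (exist_exp _)).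
Qed.

Lemma moment_term_sterm b z k : 0 < z ->
  moment_term z (- b) k = exp (- z) * Rpower z (b + 1) * sterm b z k.
Proof.
  intros Hz. unfold moment_term, sterm, poisson, ratio, Rpower.
  pose proof (lt_0_INR (S k) ltac:(lia)). pose proof (fact_INR_pos (S k)).
  rewrite ln_div, exp_Ropp by lra.
  replace (- b * (ln (INR (S k)) - ln z)) with (b * ln z - b * ln (INR (S k))) by ring.
  replace ((b + 1) * ln z) with (b * ln z + ln z) by ring.
  unfold Rminus. rewrite !exp_plus, exp_Ropp, exp_ln by lra. simpl pow.
  pose proof (exp_pos (b * ln (INR (S k)))). pose proof (exp_pos (b * ln z)).
  pose proof (exp_pos z).
  field. lra.
Qed.

Lemma is_series_moment_term b z l : 0 < z -> infinite_sum (sterm b z) l ->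
  is_series (moment_term z (- b)) (Fval b z l).
Proof.
  intros Hz Hl. apply is_series_Reals, (is_series_scal_l (exp (- z) * Rpower z (b + 1))) in Hl.
  eapply is_series_ext; [|exact Hl].
  intros k. symmetry. apply moment_term_sterm, Hz.
Qed.

Lemma ex_series_moment_term z a : 0 < z -> ex_series (moment_term z a).
Proof.
  intros Hz. destruct (ex_series_sterm (- a) z) as [l Hl].
  exists (Fval (- a) z l). rewrite <- (Ropp_involutive a) at 1.
  apply is_series_moment_term, is_series_Reals; assumption.
Qed.

Lemma Fval_moment b z l : 0 < z -> infinite_sum (sterm b z) l -> Fval b z l = moment z (- b).
Proof. intros Hz Hl. symmetry. apply is_series_unique, is_series_moment_term; assumption. Qed.

Lemma moment_term_nonneg z a k : 0 <= z -> 0 <= moment_term z a k.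
Proof.
  intros Hz. apply Rmult_le_pos; [apply poisson_nonneg, Hz | left; apply exp_pos].
Qed.

Lemma moment_0_le_1 z : 0 < z -> moment z 0 <= 1.
Proof.
  intros Hz. unfold moment.
  rewrite (Series_ext _ (fun k => poisson z (S k)))
    by (intros k; unfold moment_term; rewrite Rpower_O by (apply ratio_pos, Hz); ring).
  pose proof (Series_incr_1 (poisson z) (ex_intro _ 1 (is_series_poisson z))) as Hshift.
  rewrite (is_series_unique _ _ (is_series_poisson z)) in Hshift.
  pose proof (poisson_nonneg z 0 ltac:(lra)). lra.
Qed.

Lemma moment_1 z : 0 < z -> moment z 1 = 1.
Proof.
  intros Hz. apply is_series_unique. eapply is_series_ext; [|apply is_series_poisson].
  intros k. unfold moment_term. rewrite Rpower_1 by (apply ratio_pos, Hz).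
  symmetry. apply poisson_succ_mul_ratio, Hz.
Qed.

Lemma moment_interpolate z u a v : 0 < z -> u <= a <= v ->
  (v - u) * moment z a <= (v - a) * moment z u + (a - u) * moment z v.
Proof.
  intros Hz Ha. unfold moment. rewrite <- !Series_scal_l.
  rewrite <- Series_plus
    by (apply (ex_series_scal_l (V := R_NormedModule)), ex_series_moment_term, Hz).
  apply Series_le.
  - intros k. split.
    + apply Rmult_le_pos; [lra | apply moment_term_nonneg; lra].
    + unfold moment_term. pose proof (poisson_nonneg z (S k) ltac:(lra)).
      pose proof (Rpower_interpolate (ratio z k) u a v Ha). nra.
  - apply (ex_series_plus (V := R_NormedModule));
      apply (ex_series_scal_l (V := R_NormedModule)), ex_series_moment_term, Hz.
Qed.

Lemma moment_term_nat z m k : 0 < z -> moment_term z (INR m) k = poisson z (S k) * ratio z k ^ m.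
Proof. intros Hz. unfold moment_term. rewrite Rpower_pow by (apply ratio_pos, Hz). reflexivity. Qed.

Lemma moment_term_succ_le z m k : 0 < z ->
  moment_term z (INR (S (S m))) k <=
  poisson z k * (INR k / z) ^ S m + INR (S m) / z * moment_term z (INR (S m)) k.
Proof.
  intros Hz. rewrite !moment_term_nat, <- (poisson_succ_mul_ratio z k Hz) by exact Hz.
  assert (Hsplit : ratio z k = INR k / z + / z) by (unfold ratio; rewrite S_INR; field; lra).
  assert (Hbern : ratio z k ^ S m <= (INR k / z) ^ S m + INR (S m) * / z * ratio z k ^ m).
  { rewrite Hsplit. apply pow_succ_add_le.
    - apply Rdiv_le_0_compat; [apply pos_INR | lra].
    - left. apply Rinv_0_lt_compat, Hz. }
  assert (0 <= poisson z (S k) * ratio z k)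
    by (apply Rmult_le_pos; [apply poisson_nonneg | left; apply ratio_pos]; lra).
  apply Rmult_le_compat_l with (r := poisson z (S k) * ratio z k) in Hbern; [|assumption].
  simpl pow in Hbern |- *. unfold Rdiv. lra.
Qed.

Lemma moment_succ_le z m : 0 < z ->
  moment z (INR (S (S m))) <= (1 + INR (S m) / z) * moment z (INR (S m)).
Proof.
  intros Hz. set (q k := poisson z k * (INR k / z) ^ S m).
  assert (Hq : forall k, q (S k) = moment_term z (INR (S m)) k)
    by (intros k; rewrite moment_term_nat by exact Hz; reflexivity).
  assert (Hq_ex : ex_series q).
  { apply ex_series_incr_1. eapply ex_series_ext; [intros k; symmetry; apply Hq|].
    apply ex_series_moment_term, Hz. }
  assert (Hq_sum : Series q = moment z (INR (S m))).
  { rewrite Series_incr_1_aux by (unfold q; simpl; unfold Rdiv; ring).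
    apply Series_ext, Hq. }
  unfold moment at 1. eapply Rle_trans.
  - apply (Series_le _ (fun k => q k + INR (S m) / z * moment_term z (INR (S m)) k)).
    + intros k. split; [apply moment_term_nonneg; lra | apply moment_term_succ_le, Hz].
    + apply (ex_series_plus (V := R_NormedModule)); [exact Hq_ex|].
      apply (ex_series_scal_l (V := R_NormedModule)), ex_series_moment_term, Hz.
  - rewrite Series_plus, Series_scal_l, Hq_sum.
    + right. unfold moment. ring.
    + exact Hq_ex.
    + apply (ex_series_scal_l (V := R_NormedModule)), ex_series_moment_term, Hz.
Qed.

Lemma moment_term_opp_nat z m k : 0 < z ->
  moment_term z (- INR m) k = poisson z (S k) * (z / INR (S k)) ^ m.
Proof.
  intros Hz. unfold moment_term. pose proof (lt_0_INR (S k) ltac:(lia)).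
  rewrite Rpower_Ropp, Rpower_pow, <- pow_inv by (apply ratio_pos, Hz).
  unfold ratio. rewrite Rinv_div. reflexivity.
Qed.

Lemma moment_opp_nat_le_pow z m : 0 < z -> moment z (- INR m) <= z ^ m.
Proof.
  intros Hz. pose proof (pow_le z m ltac:(lra)).
  apply Rle_trans with (z ^ m * moment z 0).
  - unfold moment. rewrite <- Series_scal_l. apply Series_le.
    + intros k. split; [apply moment_term_nonneg; lra|].
      rewrite moment_term_opp_nat by exact Hz. unfold moment_term.
      rewrite Rpower_O by (apply ratio_pos, Hz).
      assert (Hk : 1 <= INR (S k)) by (rewrite S_INR; pose proof (pos_INR k); lra).
      assert (Hle : (z / INR (S k)) ^ m <= z ^ m).
      { apply pow_incr. split; [apply Rdiv_le_0_compat; lra|].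
        apply Rmult_le_reg_r with (INR (S k)); [lra|].
        unfold Rdiv. rewrite Rmult_assoc, Rinv_l by lra. nra. }
      pose proof (poisson_nonneg z (S k) ltac:(lra)). nra.
    + apply (ex_series_scal_l (V := R_NormedModule)), ex_series_moment_term, Hz.
  - pose proof (moment_0_le_1 z Hz). nra.
Qed.

Lemma pow_one_add_inv_le x m : 1 <= x ->
  (1 + / x) ^ S m <= 1 + INR (S m) * 2 ^ S m / (x + 1).
Proof.
  intros Hx.
  assert (Hinv : 0 < / x <= 1)
    by (split; [apply Rinv_0_lt_compat | rewrite <- Rinv_1; apply Rinv_le_contravar]; lra).
  assert (Hinv2 : / x <= 2 / (x + 1)).
  { apply Rmult_le_reg_r with (x * (x + 1)); [nra|]. field_simplify; lra. }
  assert (Hpow : (1 + / x) ^ m <= 2 ^ m) by (apply pow_incr; lra).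
  pose proof (pow_succ_add_le 1 (/ x) m ltac:(lra) ltac:(lra)) as Hbern.
  rewrite pow1 in Hbern. pose proof (pos_INR (S m)).
  pose proof (pow_le (1 + / x) m ltac:(lra)).
  assert (INR (S m) * / x * (1 + / x) ^ m <= INR (S m) * (2 / (x + 1)) * 2 ^ m).
  { apply Rmult_le_compat; [apply Rmult_le_pos | | apply Rmult_le_compat_l |]; lra. }
  replace (INR (S m) * 2 ^ S m / (x + 1)) with (INR (S m) * (2 / (x + 1)) * 2 ^ m)
    by (simpl; field; lra).
  lra.
Qed.

Lemma moment_term_opp_succ_le z m k : 0 < z ->
  moment_term z (- INR (S m)) k <=
  moment_term z (- INR m) (S k) + INR (S m) * 2 ^ S m / z * moment_term z (- INR (S m)) (S k).
Proof.
  intros Hz. rewrite !moment_term_opp_nat by exact Hz.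
  rewrite <- (poisson_succ_mul_ratio z (S k) Hz). unfold ratio.
  set (x := INR (S k)).
  replace (INR (S (S k))) with (x + 1) by (unfold x; rewrite (S_INR (S k)); ring).
  assert (Hx : 1 <= x) by (unfold x; rewrite S_INR; pose proof (pos_INR k); lra).
  set (W := poisson z (S (S k))).
  assert (HW : 0 <= W) by (apply poisson_nonneg; lra).
  assert (Hpow : 0 <= (z / (x + 1)) ^ m) by (apply pow_le, Rdiv_le_0_compat; lra).
  replace (W * ((x + 1) / z) * (z / x) ^ S m)
    with (W * (z / (x + 1)) ^ m * (1 + / x) ^ S m)
    by (replace (z / x) with (z / (x + 1) * (1 + / x)) by (field; lra);
        rewrite Rpow_mult_distr; simpl; field; lra).
  apply Rle_trans with (W * (z / (x + 1)) ^ m * (1 + INR (S m) * 2 ^ S m / (x + 1))).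
  - apply Rmult_le_compat_l; [nra | apply pow_one_add_inv_le, Hx].
  - right. simpl pow. field. lra.
Qed.

Lemma moment_opp_succ_le z m : 0 < z ->
  moment z (- INR (S m)) <=
  moment z (- INR m) + INR (S m) * 2 ^ S m / z * moment z (- INR (S m)).
Proof.
  intros Hz. set (C := INR (S m) * 2 ^ S m / z).
  assert (HC : 0 <= C)
    by (apply Rdiv_le_0_compat; [apply Rmult_le_pos; [apply pos_INR | apply pow_le] | ]; lra).
  assert (Hex : forall a, ex_series (fun k => moment_term z a (S k)))
    by (intros a; apply (ex_series_incr_1 (moment_term z a)), ex_series_moment_term, Hz).
  assert (Hshift : forall a, Series (fun k => moment_term z a (S k)) <= moment z a).
  { intros a. unfold moment. rewrite (Series_incr_1 _ (ex_series_moment_term z a Hz)).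
    pose proof (moment_term_nonneg z a 0 ltac:(lra)). lra. }
  unfold moment at 1. eapply Rle_trans.
  - apply (Series_le _ (fun k => moment_term z (- INR m) (S k)
                                 + C * moment_term z (- INR (S m)) (S k))).
    + intros k. split; [apply moment_term_nonneg; lra | apply moment_term_opp_succ_le, Hz].
    + apply (ex_series_plus (V := R_NormedModule)); [apply Hex|].
      apply (ex_series_scal_l (V := R_NormedModule)), Hex.
  - rewrite Series_plus, Series_scal_l;
      [| apply Hex | apply (ex_series_scal_l (V := R_NormedModule)), Hex].
    pose proof (Hshift (- INR m)). pose proof (Hshift (- INR (S m))).
    apply Rplus_le_compat; [assumption | apply Rmult_le_compat_l; assumption].
Qed.

Definition limsup_le_1 (f : R -> R) : Prop :=
  forall eps, 0 < eps -> Rbar_locally p_infty (fun z => f z <= 1 + eps).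

Lemma eventually_pos : Rbar_locally p_infty (fun z => 0 < z).
Proof. exists 0. tauto. Qed.

Lemma eventually_div_le C e : 0 < e -> Rbar_locally p_infty (fun z => 0 < z /\ C / z <= e).
Proof.
  intros He. exists (Rabs C / e). intros z Hz.
  assert (0 <= Rabs C / e) by (apply Rdiv_le_0_compat; [apply Rabs_pos | lra]).
  split; [lra|]. apply Rmult_le_reg_r with z; [lra|].
  unfold Rdiv in *. rewrite Rmult_assoc, Rinv_l, Rmult_1_r by lra.
  apply Rmult_lt_compat_r with (r := e) in Hz; [|lra].
  rewrite Rmult_assoc, Rinv_l, Rmult_1_r in Hz by lra.
  pose proof (Rle_abs C). lra.
Qed.

Lemma exists_margin eps : 0 < eps -> exists e, 0 < e < 1 /\ (1 - e) * (1 + eps) = 1 + e.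
Proof.
  intros Heps. exists (eps / (eps + 2)). split; [split|].
  - apply Rdiv_lt_0_compat; lra.
  - apply Rmult_lt_reg_r with (eps + 2); [lra|]. field_simplify; lra.
  - field. lra.
Qed.

Lemma limsup_le_1_of_le_1 f : (forall z, 0 < z -> f z <= 1) -> limsup_le_1 f.
Proof. intros Hf eps Heps. exists 0. intros z Hz. specialize (Hf z Hz). lra. Qed.

Lemma limsup_le_1_of_le_mul f g C : 0 <= C -> limsup_le_1 g ->
  (forall z, 0 < z -> f z <= (1 + C / z) * g z) -> limsup_le_1 f.
Proof.
  intros HC Hg Hfg eps Heps. destruct (exists_margin eps Heps) as (e & He & Heq).
  eapply filter_imp; [|exact (filter_and _ _ (Hg e (proj1 He)) (eventually_div_le C e (proj1 He)))].
  intros z (Hgz & Hz & Hd). specialize (Hfg z Hz).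
  assert (0 <= C / z) by (apply Rdiv_le_0_compat; lra).
  assert ((1 + C / z) * g z <= (1 + C / z) * (1 + e)) by (apply Rmult_le_compat_l; lra).
  nra.
Qed.

Lemma limsup_le_1_of_absorb f g C : limsup_le_1 g ->
  (forall z, 0 < z -> f z <= g z + C / z * f z) -> limsup_le_1 f.
Proof.
  intros Hg Hfg eps Heps. destruct (exists_margin eps Heps) as (e & He & Heq).
  eapply filter_imp; [|exact (filter_and _ _ (Hg e (proj1 He)) (eventually_div_le C e (proj1 He)))].
  intros z (Hgz & Hz & Hd). specialize (Hfg z Hz).
  destruct (Rle_dec (f z) (1 + eps)) as [|Hgt]; [assumption|].
  nra.
Qed.

Lemma limsup_moment_nat m : limsup_le_1 (fun z => moment z (INR m)).
Proof.
  destruct m as [|m].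
  - apply limsup_le_1_of_le_1, moment_0_le_1.
  - induction m as [|m IH].
    + apply limsup_le_1_of_le_1. intros z Hz. rewrite moment_1 by exact Hz. lra.
    + apply (limsup_le_1_of_le_mul _ _ (INR (S m)) (pos_INR (S m)) IH).
      intros z Hz. apply moment_succ_le, Hz.
Qed.

Lemma limsup_moment_opp_nat m : limsup_le_1 (fun z => moment z (- INR m)).
Proof.
  induction m as [|m IH].
  - apply limsup_le_1_of_le_1. intros z Hz. simpl INR. rewrite Ropp_0. apply moment_0_le_1, Hz.
  - apply (limsup_le_1_of_absorb _ _ (INR (S m) * 2 ^ S m) IH).
    intros z Hz. apply moment_opp_succ_le, Hz.
Qed.

Lemma limsup_moment a : limsup_le_1 (fun z => moment z a).
Proof.
  intros eps Heps. destruct (INR_unbounded (Rabs a)) as [m Hm].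
  pose proof (Rle_abs a). pose proof (Rle_abs (- a)). rewrite Rabs_Ropp in *.
  eapply filter_imp;
    [|exact (filter_and _ _ (filter_and _ _ (limsup_moment_nat m eps Heps)
                                            (limsup_moment_opp_nat m eps Heps))
                        eventually_pos)].
  intros z ((Hpos & Hneg) & Hz).
  pose proof (moment_interpolate z (- INR m) a (INR m) Hz ltac:(lra)) as Hint.
  assert (Hsum : (INR m - a) * moment z (- INR m) + (a - - INR m) * moment z (INR m)
                 <= (INR m - a) * (1 + eps) + (a - - INR m) * (1 + eps))
    by (apply Rplus_le_compat; apply Rmult_le_compat_l; lra).
  nra.
Qed.

Lemma liminf_moment a eps : 0 < eps -> Rbar_locally p_infty (fun z => 1 - eps <= moment z a).
Proof.
  intros Heps. destruct (Rle_dec a 1) as [Ha|Ha].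
  - assert (Heps' : 0 < eps / (2 - a)) by (apply Rdiv_lt_0_compat; lra).
    eapply filter_imp;
      [|exact (filter_and _ _ (limsup_moment 2 _ Heps') eventually_pos)].
    intros z (H2 & Hz).
    pose proof (moment_interpolate z a 1 2 Hz ltac:(lra)) as Hint.
    rewrite moment_1 in Hint by exact Hz.
    assert (Hlin : (1 - a) * moment z 2 <= (1 - a) * (1 + eps / (2 - a)))
      by (apply Rmult_le_compat_l; lra).
    assert (Hfrac : (1 - a) * (eps / (2 - a)) <= eps).
    { apply Rmult_le_reg_r with (2 - a); [lra|].
      unfold Rdiv. rewrite Rmult_assoc, (Rmult_assoc eps), Rinv_l by lra. nra. }
    lra.
  - exists 0. intros z Hz.
    pose proof (moment_interpolate z 0 1 a Hz ltac:(lra)) as Hint.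
    rewrite moment_1 in Hint by exact Hz.
    pose proof (moment_0_le_1 z Hz).
    assert ((a - 1) * moment z 0 <= a - 1) by nra.
    lra.
Qed.

Lemma moment_opp_nat_bounded m : exists K, forall z, 0 < z -> moment z (- INR m) <= K.
Proof.
  destruct (limsup_moment_opp_nat m 1 Rlt_0_1) as [Z HZ].
  exists (Rmax 2 (Rabs Z ^ m)). intros z Hz.
  destruct (Rlt_dec Z z) as [Hlt|Hge].
  - specialize (HZ z Hlt). pose proof (Rmax_l 2 (Rabs Z ^ m)). lra.
  - eapply Rle_trans; [apply moment_opp_nat_le_pow, Hz|].
    eapply Rle_trans; [|apply Rmax_r].
    apply pow_incr. pose proof (Rle_abs Z). lra.
Qed.

Lemma moment_bounded a : a <= 1 -> exists K, forall z, 0 < z -> moment z a <= K.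
Proof.
  intros Ha. destruct (Rle_dec 0 a) as [Ha0|Ha0].
  - exists 1. intros z Hz.
    pose proof (moment_interpolate z 0 a 1 Hz ltac:(lra)) as Hint.
    rewrite moment_1 in Hint by exact Hz.
    pose proof (moment_0_le_1 z Hz).
    assert ((1 - a) * moment z 0 <= 1 - a) by nra.
    lra.
  - destruct (INR_unbounded (- a)) as [m Hm].
    destruct (moment_opp_nat_bounded m) as [K HK].
    set (X := (0 - a) * K + (a - - INR m) * 1).
    exists (X / INR m). intros z Hz.
    pose proof (moment_interpolate z (- INR m) a 0 Hz ltac:(lra)) as Hint.
    pose proof (moment_0_le_1 z Hz). specialize (HK z Hz).
    assert (Hsum : (0 - a) * moment z (- INR m) + (a - - INR m) * moment z 0 <= X)
      by (apply Rplus_le_compat; apply Rmult_le_compat_l; lra).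
    apply Rmult_le_reg_l with (INR m); [lra|].
    replace (INR m * (X / INR m)) with X by (field; lra).
    replace (0 - - INR m) with (INR m) in Hint by ring.
    lra.
Qed.

Theorem mainTheorem11 :
  (forall b z : R, exists l : R, infinite_sum (sterm b z) l) /\
  (forall b : R,
     forall eps : R, eps > 0 ->
     exists Z : R, forall z l : R, z > Z ->
       infinite_sum (sterm b z) l -> Rabs (Fval b z l - 1) < eps) /\
  (forall b : R, b >= -1 ->
     exists M : R, forall z l : R, 0 < z ->
       infinite_sum (sterm b z) l -> Fval b z l <= M).
Proof.
  split; [|split].
  - intros b z. destruct (ex_series_sterm b z) as [l Hl].
    exists l. apply is_series_Reals, Hl.
  - intros b eps Heps. assert (Heps2 : 0 < eps / 2) by lra.
    destruct (filter_and _ _ (filter_and _ _ (limsup_moment (- b) _ Heps2)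
                                             (liminf_moment (- b) _ Heps2))
                          eventually_pos) as [Z HZ].
    exists Z. intros z l Hz Hl.
    destruct (HZ z Hz) as ((Hup & Hlow) & Hpos).
    rewrite (Fval_moment b z l Hpos Hl). apply Rabs_def1; lra.
  - intros b Hb. destruct (moment_bounded (- b)) as [K HK]; [lra|].
    exists K. intros z l Hz Hl. rewrite (Fval_moment b z l Hz Hl). apply HK, Hz.
Qed.
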